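(* Let $n\geq 5$, let $S$ be the set of all $3$-cycles in $S_n$, let $CAG_n=\mathrm{Cay}(A_n,S)$, and let $G_e$ be the stabilizer of the identity vertex $e$ in $\mathrm{Aut}(CAG_n)$. For $1\leq i<j<k\leq n$ put $\Delta_{i,j,k}=\{(i,j,k),(i,k,j)\}$ and $\Delta=\{\Delta_{i,j,k}\mid 1\leq i<j<k\leq n\}$. Each $g\in G_e$ permutes the members of $\Delta$, giving an action of $G_e$ on $\Delta$; let $K$ be the kernel of this action. Then $|K|\leq 2$.
   Context: For a finite group $\Gamma$ and a subset $T\subseteq\Gamma$ with $e\notin T$ and $T=T^{-1}$, the Cayley graph $\mathrm{Cay}(\Gamma,T)$ is the undirected graph with vertex set $\Gamma$ and edge set $\{\{\gamma,t\gamma\}\mid \gamma\in\Gamma, t\in T\}$. Elements of $G_e$ map $S$ (the neighbourhood of $e$) to itself. *)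

From mathcomp Require Import all_boot all_fingroup all_solvable.
Set Implicit Arguments. Unset Strict Implicit. Unset Printing Implicit Defensive.
Local Open Scope group_scope.

Definition is_cyc3 (n : nat) (s : {perm 'I_n}) (i j k : 'I_n) : bool :=
  [&& i != j, j != k, i != k,
      s i == j, s j == k, s k == i &
      [forall x, (x \notin [:: i; j; k]) ==> (s x == x)]].

Definition three_cycles (n : nat) : {set {perm 'I_n}} :=
  [set s | [exists i, exists j, exists k, is_cyc3 s i j k]].

Definition vert (n : nat) := {x : {perm 'I_n} | x \in Alt 'I_n}.

Definition vid (n : nat) : vert n := exist _ 1 (group1 _).

(* adjacency in Cay(A_n, S): y = t x for some t in S
   (mathcomp product x * t means "x then t", i.e. t o x) *)
Definition adj (n : nat) (x y : vert n) : bool :=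
  (val x)^-1 * val y \in three_cycles n.

Definition AutCAG (n : nat) : {set {perm vert n}} :=
  [set g : {perm vert n} | [forall x : vert n, forall y : vert n, adj (g x) (g y) == adj x y]].

Definition Ge (n : nat) : {set {perm vert n}} :=
  [set g in AutCAG n | g (vid n) == vid n].

Definition Delta (n : nat) (i j k : 'I_n) : {set vert n} :=
  [set x : vert n | is_cyc3 (val x) i j k || is_cyc3 (val x) i k j].

Definition Kker (n : nat) : {set {perm vert n}} :=
  [set g in Ge n | [forall i : 'I_n, forall j : 'I_n, forall k : 'I_n,
      ((i < j) && (j < k))%N ==> (g @: Delta i j k == Delta i j k)]].

(* Every g in K fixes e and sends each 3-cycle s to s or s^-1.  If C = (a b c)
   and X = (a b d), then C^-1 is adjacent to exactly one of X and X^-1, so g fixes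
   C iff it fixes X; moving one point at a time connects all 3-cycles, hence g
   fixes all of them or inverts all of them.  Two elements of K making the same
   choice differ by an automorphism fixing e and its neighbourhood, and such an
   automorphism is trivial: each neighbour s t of a 3-cycle s is pinned down by
   its adjacencies to vertices already known to be fixed, and translating along
   the generating set of 3-cycles spreads this over all of A_n.  The pinning-down
   step involves at most nine points, so it is checked by computation in S_m for
   5 <= m <= 9 and transported to S_n along an embedding. *)

From mathcomp Require Import all_boot all_fingroup all_solvable zify.
Set Implicit Arguments. Unset Strict Implicit. Unset Printing Implicit Defensive.
Local Open Scope group_scope.

Lemma uniq3P (T : eqType) (i j k : T) :
  reflect [/\ i != j, i != k & j != k] (uniq [:: i; j; k]).
Proof.
rewrite /= !inE negb_or andbT.
by apply: (iffP idP) => [/andP[/andP[-> ->] ->] | [-> -> ->]].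
Qed.

Lemma exists_notin (T : finType) (s : seq T) : (size s < #|T|)%N -> exists x, x \notin s.
Proof.
move=> lt_s; apply/existsP; rewrite -negb_forall; apply: contraL lt_s => /forallP s_all.
rewrite -leqNgt (leq_trans _ (card_size s)) //; apply/subset_leq_card/subsetP=> x _.
exact: s_all.
Qed.

Section TripleInvariant.
Variables (T : eqType) (h : T -> T -> T -> bool).
Hypothesis fresh : forall a b c : T, exists d, d \notin [:: a; b; c].
Hypothesis h_rot : forall a b c, uniq [:: a; b; c] -> h a b c = h b c a.
Hypothesis h_move : forall a b c d, uniq [:: a; b; c] -> uniq [:: a; b; d] -> h a b c = h a b d.

Local Ltac distinct := apply/uniq3P; split; by [|rewrite eq_sym].

Lemma triple_flip a b c : uniq [:: a; b; c] -> h a b c = h a c b.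
Proof.
case/uniq3P=> ab ac bc; have [d] := fresh a b c; rewrite !inE !negb_or => /and3P[da db dc].
rewrite (@h_move a b c d) ?(@h_rot a b d) ?(@h_move b d a c) ?(@h_rot b d c) ?(@h_rot d c b).
  rewrite ?(@h_move c b d a) ?(@h_rot c b a) ?(@h_rot b a c) //.
all: distinct.
Qed.

Lemma triple_move1 a b c x : uniq [:: a; b; c] -> uniq [:: x; b; c] -> h a b c = h x b c.
Proof.
move=> /uniq3P[ab ac bc] /uniq3P[xb xc _].
by rewrite (@h_rot a b c) ?(@h_move b c a x) ?(@h_rot b c x) ?(@h_rot c x b) //; distinct.
Qed.

Lemma triple_move2 a b c x : uniq [:: a; b; c] -> uniq [:: a; x; c] -> h a b c = h a x c.
Proof.
move=> /uniq3P[ab ac bc] /uniq3P[ax _ xc].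
by rewrite (@triple_flip a b c) ?(@h_move a c b x) ?(@triple_flip a c x) //; distinct.
Qed.

Lemma triple_share1 p b c q r : uniq [:: p; b; c] -> uniq [:: p; q; r] -> h p b c = h p q r.
Proof.
move=> /uniq3P[pb pc bc] /uniq3P[pq pr qr]; have [qc | qc] := eqVneq q c.
  by rewrite qc in pq qr *; rewrite triple_flip ?(@h_move p c b r) //; distinct.
by rewrite (triple_move2 (x := q)) ?(@h_move p q c r) //; distinct.
Qed.

Lemma triple_const a b c p q r : uniq [:: a; b; c] -> uniq [:: p; q; r] -> h a b c = h p q r.
Proof.
move=> u upqr; case/uniq3P: (u) => ab ac bc; case/uniq3P: (upqr) => pq pr qr.
have [bp|pb] := eqVneq b p.
  by subst p; rewrite (@h_rot a b c); [apply: triple_share1 | ..]; distinct.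
have [cp|pc] := eqVneq c p.
  by subst p; rewrite (@h_rot a b c) ?(@h_rot b c a); [apply: triple_share1 | ..]; distinct.
by rewrite (@triple_move1 a b c p); [apply: triple_share1 | ..]; distinct.
Qed.

End TripleInvariant.

Lemma gen_prod_ind (gT : finGroupType) (A : {set gT}) (P : gT -> Prop) :
  P 1 -> (forall x a, x \in <<A>> -> a \in A -> P x -> P (x * a)) ->
  forall x, x \in <<A>> -> P x.
Proof.
move=> P1 PM x /gen_prodgP[k [c cA ->]]; elim: k c cA => [|k IHk] c cA.
  by rewrite big_ord0.
rewrite big_ord_recr /=; apply: PM (IHk _ (fun i => cA _)) => //.
by apply: group_prod => i _; apply: mem_gen.
Qed.

Section ThreeCycles.
Variable n : nat.
Implicit Types (s g : {perm 'I_n}) (i j k x : 'I_n).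
Local Notation S := (three_cycles n).

Definition cyc3 i j k : {perm 'I_n} := tperm i j * tperm i k.

Lemma cyc3E i j k x : uniq [:: i; j; k] ->
  cyc3 i j k x = if x == i then j else if x == j then k else if x == k then i else x.
Proof.
case/uniq3P=> ij ik jk; rewrite permM.
case: (x =P i) => [->|/eqP xi]; first by rewrite tpermL tpermD // eq_sym.
case: (x =P j) => [->|/eqP xj]; first by rewrite tpermR tpermL.
case: (x =P k) => [->|/eqP xk]; first by rewrite (tpermD ik) ?tpermR // eq_sym.
by rewrite !tpermD // eq_sym.
Qed.

Lemma cyc3_pts i j k : uniq [:: i; j; k] ->
  [/\ cyc3 i j k i = j, cyc3 i j k j = k & cyc3 i j k k = i].
Proof.
move=> u; case/uniq3P: (u) => ij ik jk; rewrite !cyc3E // !eqxx.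
by rewrite !(eq_sym _ i) (negbTE ij) (negbTE ik) (eq_sym k) (negbTE jk).
Qed.

Lemma is_cyc3E s i j k : is_cyc3 s i j k = uniq [:: i; j; k] && (s == cyc3 i j k).
Proof.
apply/idP/andP => [|[u /eqP->]].
  case/and5P=> ij jk ik /eqP si /andP[/eqP sj /andP[/eqP sk /forallP fix_s]].
  have u : uniq [:: i; j; k] by apply/uniq3P.
  split=> //; apply/eqP/permP=> x; rewrite cyc3E //.
  case: (x =P i) => [->|/eqP xi] //; case: (x =P j) => [->|/eqP xj] //.
  case: (x =P k) => [->|/eqP xk] //; apply/eqP/(implyP (fix_s x)).
  by rewrite !inE !negb_or xi xj xk.
case/uniq3P: (u) => ij ik jk; rewrite /is_cyc3; have [-> -> ->] := cyc3_pts u.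
rewrite ij ik jk !eqxx /=; apply/forallP=> x; apply/implyP.
by rewrite cyc3E // !inE !negb_or => /and3P[/negbTE-> /negbTE-> /negbTE->].
Qed.

Lemma three_cyclesP s :
  reflect (exists i j k, uniq [:: i; j; k] /\ s = cyc3 i j k) (s \in S).
Proof.
rewrite inE; apply: (iffP existsP) => [[i /existsP[j /existsP[k]]]|[i [j [k [u ->]]]]].
  by rewrite is_cyc3E => /andP[u /eqP->]; exists i, j, k.
by exists i; apply/existsP; exists j; apply/existsP; exists k; rewrite is_cyc3E u eqxx.
Qed.

Lemma cyc3_mem i j k : uniq [:: i; j; k] -> cyc3 i j k \in S.
Proof. by move=> u; apply/three_cyclesP; exists i, j, k. Qed.

Lemma cyc3_rot i j k : uniq [:: i; j; k] -> cyc3 i j k = cyc3 j k i.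
Proof.
move=> u; have u' : uniq [:: j; k; i] by rewrite -(rot_uniq 1) in u.
case/uniq3P: (u) => ij ik jk; apply/permP=> x; rewrite !cyc3E //.
by case: (x =P i) => [->|//]; rewrite (negbTE ij) (negbTE ik).
Qed.

Lemma cyc3V i j k : (cyc3 i j k)^-1 = cyc3 i k j.
Proof. by rewrite invMg !tpermV. Qed.

Lemma cyc3J i j k g : cyc3 i j k ^ g = cyc3 (g i) (g j) (g k).
Proof. by rewrite conjMg !tpermJ. Qed.

Lemma cyc3_Alt i j k : uniq [:: i; j; k] -> cyc3 i j k \in Alt 'I_n.
Proof. by case/uniq3P=> ij ik _; rewrite Alt_even odd_permM !odd_tperm ij ik. Qed.

Lemma three_cycles_Alt : S \subset Alt 'I_n.
Proof. by apply/subsetP=> s /three_cyclesP[i [j [k [u ->]]]]; apply: cyc3_Alt. Qed.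

Lemma three_cyclesV s : (s^-1 \in S) = (s \in S).
Proof.
suff imV t : t \in S -> t^-1 \in S by apply/idP/idP => /imV; rewrite ?invgK.
case/three_cyclesP=> i [j [k [u ->]]]; rewrite cyc3V cyc3_mem //.
by case/uniq3P: u => ij ik jk; apply/uniq3P; split; rewrite // eq_sym.
Qed.

Lemma three_cyclesJ s g : (s ^ g \in S) = (s \in S).
Proof.
suff imJ t h : t \in S -> t ^ h \in S.
  by apply/idP/idP => [/(imJ _ g^-1)|/imJ //]; rewrite conjgK.
case/three_cyclesP=> i [j [k [u ->]]]; rewrite cyc3J cyc3_mem //.
by rewrite -(map_inj_uniq (@perm_inj _ h)) in u.
Qed.

Lemma three_cycles_fix_sq s x : s \in S -> s (s x) = x -> s x = x.
Proof.
case/three_cyclesP=> i [j [k [u ->]]]; case/uniq3P: (u) => ij ik jk.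
have [ji ki kj] : [/\ j != i, k != i & k != j] by rewrite !(eq_sym _ i) (eq_sym k) ij ik jk.
rewrite !cyc3E //; case: (x =P i) => [->|_].
  by rewrite (negbTE ji) eqxx => /eqP; rewrite (negbTE ki).
case: (x =P j) => [->|_].
  by rewrite (negbTE ki) (negbTE kj) eqxx => /eqP; rewrite (negbTE ij).
case: (x =P k) => [->|//].
by rewrite eqxx => /eqP; rewrite (negbTE jk).
Qed.

Lemma three_cycles_invg_neq s : s \in S -> s^-1 != s.
Proof.
move=> sS; apply/eqP=> sVs; case/three_cyclesP: (sS) => i [j [k [u def_s]]].
have := three_cycles_fix_sq (x := i) sS; rewrite -{1}sVs permK def_s cyc3E // eqxx.
by case/uniq3P: u => ij _ _ /(_ erefl) ji; rewrite ji eqxx in ij.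
Qed.

Lemma three_cycles_min s : s \in S ->
  exists a b c : 'I_n, [/\ uniq [:: a; b; c], a < b, a < c & s = cyc3 a b c]%N.
Proof.
case/three_cyclesP=> i [j [k [u ->]]].
have u1 : uniq [:: j; k; i] by rewrite -(rot_uniq 1) in u.
have u2 : uniq [:: k; i; j] by rewrite -(rot_uniq 2) in u.
case/uniq3P: (u); rewrite -!val_eqE /= => ij ik jk.
have [[lt_ij lt_ik]|[[lt_jk lt_ji]|[lt_ki lt_kj]]] :
  (i < j /\ i < k \/ j < k /\ j < i \/ k < i /\ k < j)%N by lia.
- by exists i, j, k.
- by exists j, k, i; rewrite cyc3_rot.
- by exists k, i, j; rewrite cyc3_rot // cyc3_rot.
Qed.

End ThreeCycles.

Lemma gen_three_cycles n : (5 <= n)%N -> <<three_cycles n>> = Alt 'I_n.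
Proof.
move=> n5; have sSA := three_cycles_Alt n.
have nSA : Alt 'I_n \subset 'N(three_cycles n).
  by apply/subsetP=> g _; rewrite inE; apply/subsetP=> y; rewrite mem_conjg three_cyclesJ.
have S_normal : <<three_cycles n>> <| Alt 'I_n by rewrite /normal gen_subG sSA norms_gen.
have [lt0n lt1n lt2n] : [/\ 0 < n, 1 < n & 2 < n]%N by split; lia.
have u : uniq [:: Ordinal lt0n; Ordinal lt1n; Ordinal lt2n] by [].
have card_n : (4 < #|'I_n|)%N by rewrite card_ord.
case/simpleP: (simple_Alt5 card_n) => _ /(_ _ S_normal) [S1|] //.
have := mem_gen (cyc3_mem u); rewrite S1 inE => /eqP/permP/(_ (Ordinal lt0n)).
by rewrite cyc3E // perm1 eqxx => /(congr1 val).
Qed.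

Section Separation.
Variable n : nat.
Local Notation S := (three_cycles n).
Implicit Types (z w v a b : {perm 'I_n}).

(* [separates z w v]: the vertex z^-1 is adjacent to exactly one of w and v.
   In [separated], z^-1 ranges over vertices that the rigidity argument fixes
   before w: e, the 3-cycles and, when w is an involution, the non-involutive
   products of two 3-cycles. *)
Definition separates z w v := (z * w \in S) != (z * v \in S).

Definition separated w v :=
  (exists2 z, (z == 1) || (z \in S) & separates z w v) \/
  (w * w = 1 /\ exists a b, [/\ a \in S, b \in S, a * b * (a * b) != 1 & separates (a * b) w v]).

End Separation.

Section CayleyGraph.
Variable n : nat.
Local Notation V := (vert n).
Local Notation S := (three_cycles n).
Implicit Types (x y z : V) (F : V -> V).

Definition vx (s : {perm 'I_n}) : V := insubd (vid n) s.

Lemma vxK s : s \in Alt 'I_n -> val (vx s) = s.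
Proof. exact: insubdK. Qed.

Lemma vx1 : vx 1 = vid n.
Proof. by apply: val_inj; rewrite vxK ?group1. Qed.

Definition vtrans (s : {perm 'I_n}) x : V := vx (s * val x).

Lemma vtrans_vx s t : s \in Alt 'I_n -> t \in Alt 'I_n -> vtrans s (vx t) = vx (s * t).
Proof. by move=> sA tA; rewrite /vtrans vxK. Qed.

Lemma vtransKV s : s \in Alt 'I_n -> cancel (vtrans s^-1) (vtrans s).
Proof. by move=> sA x; apply: val_inj; rewrite !vxK ?mulKVg ?groupM ?groupV ?(valP x). Qed.

Lemma adj_vtrans s x y : s \in Alt 'I_n -> adj (vtrans s x) (vtrans s y) = adj x y.
Proof.
by move=> sA; rewrite /adj !vxK ?groupM ?(valP x) ?(valP y) // invMg mulgA mulgKV.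
Qed.

Definition adj_preserving F := forall x y, adj (F x) (F y) = adj x y.

Definition fixes_ball1 F := F (vid n) = vid n /\ forall a, a \in S -> F (vx a) = vx a.

Section LocalToGlobal.
Hypothesis local_rigidity : forall F, adj_preserving F -> fixes_ball1 F ->
  forall a b, a \in S -> b \in S -> F (vx (a * b)) = vx (a * b).

Lemma rigid_global F : (5 <= n)%N -> adj_preserving F -> fixes_ball1 F -> F =1 id.
Proof.
move=> n5 F_adj [Fe FS]; have SA := subsetP (three_cycles_Alt n).
(* P t propagates along S: conjugating F by the translation by t reduces
   P (t * a) to the local rigidity of that conjugate. *)
pose P t := F (vx t) = vx t /\ forall a, a \in S -> F (vx (t * a)) = vx (t * a).
suff P_all : forall t, t \in <<S>> -> P t.
  move=> x; have xS : val x \in <<S>> by rewrite gen_three_cycles // (valP x).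
  by case: (P_all _ xS); rewrite /vx valKd.
apply: gen_prod_ind => [|s a sS aS [Fs Fsb]]; rewrite /P.
  split=> [|a aS]; first by rewrite -vx1 in Fe.
  by apply: FS; rewrite mul1g.
split=> [|b bS]; first exact: Fsb.
have sA : s \in Alt 'I_n by rewrite -gen_three_cycles.
pose G x := vtrans s^-1 (F (vtrans s x)).
have G_adj : adj_preserving G.
  by move=> x y; rewrite /G adj_vtrans ?groupV // F_adj adj_vtrans.
have G_ball1 : fixes_ball1 G.
  split=> [|c cS]; rewrite /G.
    by rewrite -vx1 vtrans_vx ?group1 // mulg1 Fs vtrans_vx ?groupV // mulVg.
  by rewrite vtrans_vx ?(SA _ cS) // Fsb // vtrans_vx ?groupV ?groupM ?(SA _ cS) // mulKg.
have := local_rigidity G_adj G_ball1 aS bS; rewrite /G vtrans_vx ?groupM ?(SA _ aS) ?(SA _ bS) //.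
rewrite -mulgA => /(canRL (vtransKV sA)) ->.
by rewrite vtrans_vx ?groupM ?(SA _ aS) ?(SA _ bS).
Qed.

End LocalToGlobal.

End CayleyGraph.

Section PermTransfer.
Variables (T T' : finType) (f : T -> T').
Hypothesis f_inj : injective f.

Definition push_fun (p : {perm T}) (x : T') : T' :=
  if [pick y | f y == x] is Some y then f (p y) else x.

Lemma push_funE p y : push_fun p (f y) = f (p y).
Proof. by rewrite /push_fun; case: pickP => [z /eqP/f_inj -> | /(_ y)/eqP]. Qed.

Lemma push_fun_out p x : x \notin codom f -> push_fun p x = x.
Proof.
move=> xf; rewrite /push_fun; case: pickP => // y /eqP fy.
by rewrite -fy codom_f in xf.
Qed.

Lemma push_fun_inj p : injective (push_fun p).
Proof.
move=> x1 x2; case: (boolP (x1 \in codom f)) => [/codomP[y1 ->]|x1f];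
  case: (boolP (x2 \in codom f)) => [/codomP[y2 ->]|x2f];
  rewrite ?push_funE ?push_fun_out //.
- by move/f_inj/perm_inj->.
- by move=> def_x2; rewrite -def_x2 codom_f in x2f.
- by move=> def_x1; rewrite def_x1 codom_f in x1f.
Qed.

Definition push p : {perm T'} := perm (@push_fun_inj p).

Lemma pushE p y : push p (f y) = f (p y).
Proof. by rewrite permE push_funE. Qed.

Lemma push_out p x : x \notin codom f -> push p x = x.
Proof. by move=> xf; rewrite permE push_fun_out. Qed.

Lemma pushM p q : push (p * q) = push p * push q.
Proof.
apply/permP=> x; rewrite permM; case: (boolP (x \in codom f)) => [/codomP[y ->]|xf].
  by rewrite !pushE permM.
by rewrite !push_out.
Qed.

Lemma push1 : push 1 = 1.
Proof.
apply/permP=> x; rewrite perm1; case: (boolP (x \in codom f)) => [/codomP[y ->]|xf].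
  by rewrite pushE perm1.
by rewrite push_out.
Qed.

Lemma push_inj : injective push.
Proof. by move=> p q push_pq; apply/permP=> y; apply: f_inj; rewrite -!pushE push_pq. Qed.

Lemma push_tperm a b : push (tperm a b) = tperm (f a) (f b).
Proof.
apply/permP=> x; case: (boolP (x \in codom f)) => [/codomP[y ->]|xf].
  by rewrite pushE !permE /= !(inj_eq f_inj); case: ifP => // _; case: ifP.
rewrite push_out // tpermD //; apply: contraNneq xf => <-; exact: codom_f.
Qed.

End PermTransfer.

Section ThreeCycleTransfer.
Variables (m n : nat) (f : 'I_m -> 'I_n).
Hypothesis f_inj : injective f.

Lemma push_cyc3 a b c : push f_inj (cyc3 a b c) = cyc3 (f a) (f b) (f c).
Proof. by rewrite pushM !push_tperm. Qed.

Lemma push_three_cycles p :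
  (push f_inj p \in three_cycles n) = (p \in three_cycles m).
Proof.
have uniq_f a b c : uniq [:: f a; f b; f c] = uniq [:: a; b; c].
  by rewrite -(map_inj_uniq f_inj).
apply/idP/idP => [|/three_cyclesP[a [b [c [u ->]]]]]; last first.
  by rewrite push_cyc3 cyc3_mem ?uniq_f.
case/three_cyclesP=> i [j [k [u def_p]]]; case/uniq3P: (u) => ij _ _.
have [pi pj pk] := cyc3_pts u; rewrite -def_p in pi pj pk.
have [a def_i] : exists a, i = f a.
  by apply/codomP; apply: contraNT ij => i_out; rewrite -pi push_out.
rewrite def_i pushE in pi; rewrite -pi pushE in pj.
have : push f_inj p = push f_inj (cyc3 a (p a) (p (p a))).
  by rewrite push_cyc3 pi pj -def_i.
by move/push_inj=> ->; rewrite cyc3_mem // -uniq_f pi pj -def_i.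
Qed.
End ThreeCycleTransfer.

Lemma separated_push m n (f : 'I_m -> 'I_n) (f_inj : injective f) w v :
  separated w v -> separated (push f_inj w) (push f_inj v).
Proof.
have push_eq1 p : (push f_inj p == 1) = (p == 1).
  by rewrite -(push1 f_inj) (inj_eq (@push_inj _ _ _ f_inj)).
have push_sep z : separates (push f_inj z) (push f_inj w) (push f_inj v) = separates z w v.
  by rewrite /separates -!pushM !push_three_cycles.
case=> [[z z1S sep_z] | [ww1 [a [b [aS bS ab2 sep_ab]]]]].
  by left; exists (push f_inj z); rewrite ?push_eq1 ?push_three_cycles ?push_sep.
right; split; first by rewrite -pushM ww1 (push1 f_inj).
exists (push f_inj a), (push f_inj b); rewrite !push_three_cycles -!pushM push_eq1 push_sep.
by split.
Qed.

Section SeqPerm.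
Variable m : nat.
Local Notation S := (three_cycles m).
Implicit Types (p q : seq nat) (P Q : {perm 'I_m}).

Lemma nat_of_ord_eqE (x y : 'I_m) : (nat_of_ord x == nat_of_ord y) = (x == y).
Proof. by []. Qed.

Definition represents p P := size p = m /\ forall x : 'I_m, nth 0 p x = P x.

Definition seq_mul p q : seq nat := map (nth 0 q) p.

Definition seq_cyc3 (a b c : nat) : seq nat :=
  [seq if x == a then b else if x == b then c else if x == c then a else x | x <- iota 0 m].

Definition seq_is_cyc3 p : bool :=
  has (fun i => let j := nth 0 p i in let k := nth 0 p j in
     [&& i != j, j != k, i != k, nth 0 p k == i &
         all (fun x => (x \in [:: i; j; k]) || (nth 0 p x == x)) (iota 0 m)]) (iota 0 m).

Definition seq_invol p : bool := all (fun x => nth 0 p (nth 0 p x) == x) (iota 0 m).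

Definition cyc3_triples : seq (nat * nat * nat) :=
  [seq T <- [seq (ab, c) | ab <- [seq (a, b) | a <- iota 0 m, b <- iota 0 m], c <- iota 0 m]
     | [&& T.1.1 < T.1.2, T.1.1 < T.2 & T.1.2 != T.2]%N].

Definition seq_cycles : seq (seq nat) := [seq seq_cyc3 T.1.1 T.1.2 T.2 | T <- cyc3_triples].

Lemma all_iota (r : pred nat) : all r (iota 0 m) = [forall x : 'I_m, r x].
Proof.
apply/allP/forallP => [r_all x|r_all x]; first by apply: r_all; rewrite mem_iota ltn_ord.
by rewrite mem_iota add0n => /= x_lt; apply: (r_all (Ordinal x_lt)).
Qed.

Lemma has_iota (r : pred nat) : has r (iota 0 m) = [exists x : 'I_m, r x].
Proof. by apply/negb_inj; rewrite -all_predC all_iota negb_exists. Qed.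

Lemma represents_mul p q P Q : represents p P -> represents q Q -> represents (seq_mul p q) (P * Q).
Proof.
case=> size_p pP [size_q qQ]; split; first by rewrite size_map.
by move=> x; rewrite (nth_map 0) ?size_p // pP qQ permM.
Qed.

Lemma represents1 : represents (iota 0 m) 1.
Proof. by split=> [|x]; rewrite ?size_iota // nth_iota // perm1. Qed.

Lemma represents_cyc3 (a b c : 'I_m) :
  uniq [:: a; b; c] -> represents (seq_cyc3 a b c) (cyc3 a b c).
Proof.
move=> u; split=> [|x]; first by rewrite size_map size_iota.
rewrite (nth_map 0) ?size_iota // nth_iota // add0n cyc3E //.
by rewrite !nat_of_ord_eqE; case: ifP => // _; case: ifP => // _; case: ifP.
Qed.

Lemma represents_eq p q P Q : represents p P -> represents q Q -> (p == q) = (P == Q).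
Proof.
case=> size_p pP [size_q qQ]; apply/eqP/eqP => [pq|PQ].
  by apply/permP=> x; apply: ord_inj; rewrite -pP -qQ pq.
apply: (@eq_from_nth _ 0) => [|x]; first by rewrite size_p size_q.
by rewrite size_p => x_lt; rewrite (pP (Ordinal x_lt)) (qQ (Ordinal x_lt)) PQ.
Qed.

Lemma represents_invol p P : represents p P -> seq_invol p = (P * P == 1).
Proof.
case=> _ pP; rewrite /seq_invol all_iota; apply/forallP/eqP => [p2 | P2 x].
  by apply/permP=> x; apply: ord_inj; rewrite permM perm1 -!pP; apply/eqP/p2.
by rewrite !pP -permM P2 perm1.
Qed.

Lemma represents_is_cyc3 p P : represents p P -> seq_is_cyc3 p = (P \in S).
Proof.
case=> _ pP; rewrite /seq_is_cyc3 has_iota inE.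
apply/existsP/existsP => [[i /=]|[i /existsP[j /existsP[k]]]].
  rewrite !pP !nat_of_ord_eqE all_iota => /and5P[ij jk ik /eqP Pk /forallP fixP].
  exists i; apply/existsP; exists (P i); apply/existsP; exists (P (P i)).
  rewrite /is_cyc3 ij jk ik Pk !eqxx /=; apply/forallP=> x; apply/implyP.
  by move: (fixP x); rewrite /= !inE pP !nat_of_ord_eqE => /orP[->|].
rewrite is_cyc3E => /andP[u /eqP defP]; exists i.
have [Pi Pj Pk] := cyc3_pts u; rewrite -defP in Pi Pj Pk.
case/uniq3P: (u) => ij ik jk; rewrite /= !pP Pi Pj Pk !nat_of_ord_eqE ij jk ik !eqxx /= all_iota.
apply/forallP=> x; rewrite /= pP !inE !nat_of_ord_eqE defP cyc3E //.
by case: (x =P i) => //; case: (x =P j) => //; case: (x =P k) => //; rewrite eqxx orbT.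
Qed.

Lemma mem_cyc3_triples a b c :
  ((a, b, c) \in cyc3_triples) = [&& a < b, a < c, b != c, b < m & c < m]%N.
Proof.
rewrite mem_filter /=; apply/andP/and5P => [[/and3P[ab ac bc]]|[ab ac bc bm cm]].
  case/allpairsP=> [[ab' c'] [/allpairsP[[a' b'] [_ b_in ->]] c_in /= [ea eb ec]]]; subst.
  by move: b_in c_in; rewrite !mem_iota /= ab ac bc => -> ->.
split; first by rewrite ab ac bc.
apply: (allpairs_f pair); last by rewrite mem_iota.
by apply: allpairs_f; rewrite mem_iota //; lia.
Qed.

Lemma seq_cyclesP p : p \in seq_cycles -> exists2 P, P \in S & represents p P.
Proof.
case/mapP=> [[[a b] c] abc ->] /=; move: abc; rewrite mem_cyc3_triples => /and5P[ab ac bc bm cm].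
have am : (a < m)%N by lia.
have u : uniq [:: Ordinal am; Ordinal bm; Ordinal cm].
  by apply/uniq3P; split; apply/eqP => /(congr1 val) /=; lia.
exists (cyc3 (Ordinal am) (Ordinal bm) (Ordinal cm)); first exact: cyc3_mem.
exact: (represents_cyc3 u).
Qed.

Lemma seq_cycles_complete P : P \in S -> exists2 p, p \in seq_cycles & represents p P.
Proof.
case/three_cycles_min=> a [b [c [u ab ac ->]]].
exists (seq_cyc3 a b c); last exact: represents_cyc3.
apply: (map_f (fun T => seq_cyc3 T.1.1 T.1.2 T.2) (x := (val a, val b, val c))).
by case/uniq3P: u; rewrite mem_cyc3_triples ab ac !ltn_ord -!val_eqE /= => _ _ ->.
Qed.

Definition adjacency_profile (w : seq nat) : seq bool :=
  [seq seq_is_cyc3 (seq_mul z w) | z <- iota 0 m :: seq_cycles].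

(* [find _ _ < size _] and [if] instead of [has] and [||]: vm_compute evaluates
   arguments eagerly, and only these forms skip the costly searches. *)
Definition separated2_check (w v : seq nat) : bool :=
  find (fun a => find (fun b => let z := seq_mul a b in
      ~~ seq_invol z && (seq_is_cyc3 (seq_mul z w) != seq_is_cyc3 (seq_mul z v)))
    seq_cycles < size seq_cycles) seq_cycles < size seq_cycles.

Definition separation_check : bool :=
  let data :=
    [seq let w := seq_mul (seq_cyc3 0 1 2) t in (w, adjacency_profile w) | t <- seq_cycles] in
  all (fun d => all (fun e => if (d.1 == e.1) || (d.2 != e.2) then true
                              else seq_invol d.1 && separated2_check d.1 e.1) data) data.

Lemma adjacency_profile_sound w v W V : represents w W -> represents v V ->
  adjacency_profile w != adjacency_profile v ->
  exists2 z, (z == 1) || (z \in S) & separates z W V.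
Proof.
move=> wW vV neq_wv.
have [z z_in sep] : exists2 z, z \in iota 0 m :: seq_cycles &
    seq_is_cyc3 (seq_mul z w) != seq_is_cyc3 (seq_mul z v).
  apply/hasP; apply: contraNT neq_wv => /hasPn same.
  by apply/eqP/eq_in_map => z /same; rewrite negbK => /eqP.
have [Z Z1S zZ] : exists2 Z, (Z == 1) || (Z \in S) & represents z Z.
  case/predU1P: z_in => [->|/seq_cyclesP[Z ZS zZ]].
    by exists 1; [rewrite eqxx | exact: represents1].
  by exists Z; rewrite ?ZS ?orbT.
exists Z => //; move: sep.
by rewrite (represents_is_cyc3 (represents_mul zZ wW)) (represents_is_cyc3 (represents_mul zZ vV)).
Qed.

Lemma separated2_check_sound w v W V : represents w W -> represents v V ->
  separated2_check w v ->
  exists a b, [/\ a \in S, b \in S, a * b * (a * b) != 1 & separates (a * b) W V].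
Proof.
move=> wW vV; rewrite /separated2_check -has_find => /hasP[a /seq_cyclesP[A AS aA]].
rewrite -has_find => /hasP[b /seq_cyclesP[B BS bB]] /andP[].
have abAB := represents_mul aA bB.
rewrite (represents_invol abAB) (represents_is_cyc3 (represents_mul abAB wW)).
by rewrite (represents_is_cyc3 (represents_mul abAB vV)) => ninv sep; exists A, B.
Qed.

Lemma separation_check_sound (i0 i1 i2 : 'I_m) :
  val i0 = 0%N -> val i1 = 1%N -> val i2 = 2%N -> separation_check ->
  forall t t', t \in S -> t' \in S -> cyc3 i0 i1 i2 * t != cyc3 i0 i1 i2 * t' ->
  separated (cyc3 i0 i1 i2 * t) (cyc3 i0 i1 i2 * t').
Proof.
move=> i00 i11 i22 check t t'.
move=> /seq_cycles_complete[p p_in pt] /seq_cycles_complete[p' p'_in p't] neq.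
have u : uniq [:: i0; i1; i2] by apply/uniq3P; rewrite -!val_eqE i00 i11 i22.
have s0 := represents_cyc3 u; rewrite i00 i11 i22 in s0.
have [wt wt'] := (represents_mul s0 pt, represents_mul s0 p't).
move/allP: check => /(_ _ (map_f _ p_in)) /allP /(_ _ (map_f _ p'_in)) /=.
rewrite (represents_eq wt wt') (negbTE neq) /=.
case: ifP => [/adjacency_profile_sound sep _|_ /andP[]]; first by left; apply: sep.
by rewrite (represents_invol wt) => /eqP w2 /(separated2_check_sound wt wt') sep; right.
Qed.

End SeqPerm.

Lemma separation_check_small m : (4 < m < 10)%N -> separation_check m.
Proof.
move=> m_bounds.
have [->|[->|[->|[->|->]]]] : m = 5 \/ m = 6 \/ m = 7 \/ m = 8 \/ m = 9 by lia.
all: by vm_compute.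
Qed.

Lemma cyc3_push m n (f : 'I_m -> 'I_n) (f_inj : injective f) a b c :
  uniq [:: a; b; c] -> {subset [:: a; b; c] <= codom f} ->
  exists2 T, T \in three_cycles m & cyc3 a b c = push f_inj T.
Proof.
move=> u /allP/and4P[/codomP[x def_a] /codomP[y def_b] /codomP[z def_c] _]; subst a b c.
exists (cyc3 x y z); last by rewrite push_cyc3.
by rewrite cyc3_mem // -(map_inj_uniq f_inj).
Qed.

Lemma embed_points n (i j k : 'I_n) (rest : seq 'I_n) :
  (4 < n)%N -> uniq [:: i; j; k] -> (size rest <= 6)%N ->
  exists l : seq 'I_n,
    [/\ uniq l, (4 < size l < 10)%N, {subset rest <= l} & take 3 l = [:: i; j; k]].
Proof.
move=> n4 u size_rest.
pose l0 := i :: j :: k :: undup [seq x <- rest | x \notin [:: i; j; k]].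
pose extra := [seq x <- enum 'I_n | x \notin l0].
have ul0 : uniq l0.
  rewrite (cat_uniq [:: i; j; k]) u undup_uniq andbT /=.
  by apply/hasP=> -[x]; rewrite mem_undup mem_filter => /andP[/negP].
have size_l0 : (size l0 <= 9)%N.
  rewrite /= !ltnS (leq_trans (size_undup _)) // size_filter.
  exact: leq_trans (count_size _ _) size_rest.
have cover : (n <= size l0 + size extra)%N.
  rewrite -size_cat -{1}(size_enum_ord n) uniq_leq_size ?enum_uniq // => x _.
  by rewrite mem_cat mem_filter mem_enum andbT orbN.
exists (l0 ++ take (5 - size l0) extra); split.
- have u_extra : uniq extra by rewrite filter_uniq // enum_uniq.
  rewrite cat_uniq ul0 take_uniq // andbT.
  by apply/hasP=> -[x /mem_take]; rewrite mem_filter => /andP[/negP].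
- rewrite size_cat size_takel; move: size_l0 cover; move: (size l0) (size extra) => a b; lia.
- move=> x x_rest; rewrite mem_cat -[l0]/([:: i; j; k] ++ _) mem_cat mem_undup mem_filter.
  by rewrite x_rest andbT orbN.
by rewrite /= take0.
Qed.

Lemma three_cycles_separated n (s t t' : {perm 'I_n}) : (4 < n)%N ->
  s \in three_cycles n -> t \in three_cycles n -> t' \in three_cycles n ->
  s * t != s * t' -> separated (s * t) (s * t').
Proof.
move=> n4 /three_cyclesP[i [j [k [u ->]]]].
move=> /three_cyclesP[a [b [c [ut ->]]]] /three_cyclesP[a' [b' [c' [ut' ->]]]].
have [l [ul size_l sub_l take_l]] :=
  embed_points (rest := [:: a; b; c] ++ [:: a'; b'; c']) n4 u isT.
have f_inj : injective (tnth (in_tuple l)) by apply/tuple_uniqP.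
have in_f x : x \in l -> x \in codom (tnth (in_tuple l)).
  by move=> x_l; have /tnthP[y ->] : x \in in_tuple l by []; apply: codom_f.
have [T TS ->] : exists2 T, T \in three_cycles _ & cyc3 a b c = push f_inj T.
  by apply: cyc3_push => // x xt; apply/in_f/sub_l; rewrite mem_cat xt.
have [T' T'S ->] : exists2 T, T \in three_cycles _ & cyc3 a' b' c' = push f_inj T.
  by apply: cyc3_push => // x xt; apply/in_f/sub_l; rewrite mem_cat xt orbT.
have nth_l x : (x < 3)%N -> nth i l x = nth i [:: i; j; k] x.
  by move=> x_lt; rewrite -take_l nth_take.
have [lt0 lt1 lt2] : [/\ 0 < size l, 1 < size l & 2 < size l]%N by case/andP: size_l; split; lia.
pose i0 := Ordinal lt0; pose i1 := Ordinal lt1; pose i2 := Ordinal lt2.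
have -> : cyc3 i j k = push f_inj (cyc3 i0 i1 i2).
  by rewrite push_cyc3 !(tnth_nth i) /= !nth_l.
rewrite -!pushM (inj_eq (@push_inj _ _ _ f_inj)) => neq; apply: separated_push.
exact: separation_check_sound (separation_check_small size_l) _ _ TS T'S neq.
Qed.

Section Rigidity.
Variable n : nat.
Hypothesis n4 : (4 < n)%N.
Local Notation S := (three_cycles n).
Implicit Types (G : vert n -> vert n) (a b c d z : {perm 'I_n}).

Lemma fixed_vertex_not_separates G z y : adj_preserving G -> z \in Alt 'I_n ->
  G (vx z^-1) = vx z^-1 -> ~~ separates z (val y) (val (G y)).
Proof.
move=> G_adj zA Gz; rewrite /separates negbK.
by have := G_adj (vx z^-1) y; rewrite Gz /adj vxK ?groupV // invgK => ->.
Qed.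

Lemma rigid_product G a b : adj_preserving G -> fixes_ball1 G -> a \in S -> b \in S ->
  (a * b * (a * b) = 1 -> forall c d, c \in S -> d \in S -> c * d * (c * d) != 1 ->
     G (vx (c * d)) = vx (c * d)) ->
  G (vx (a * b)) = vx (a * b).
Proof.
move=> G_adj [Ge GS] aS bS invol_fixed; have SA := subsetP (three_cycles_Alt n).
set y := vx (a * b); have val_y : val y = a * b by rewrite vxK // groupM ?SA.
have tS : a^-1 * val (G y) \in S.
  have := G_adj (vx a) y; rewrite GS // /adj val_y vxK ?SA // mulKg bS.
  by move=> ->.
apply: val_inj; rewrite val_y; apply/eqP; apply: contraT => neq.
have := three_cycles_separated n4 aS bS tS; rewrite mulKVg eq_sym => /(_ neq).
case=> [[z z1S sep] | [ab2 [c [d [cS dS cd2 sep]]]]].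
  have zA : z \in Alt 'I_n by case/orP: z1S => [/eqP->|/SA//]; apply: group1.
  suff Gz : G (vx z^-1) = vx z^-1.
    by rewrite -val_y (negbTE (fixed_vertex_not_separates y G_adj zA Gz)) in sep.
  case/orP: z1S => [/eqP->|zS]; first by rewrite invg1 vx1.
  by apply: GS; rewrite three_cyclesV.
have cdA : c * d \in Alt 'I_n by rewrite groupM ?SA.
suff Gcd : G (vx (c * d)^-1) = vx (c * d)^-1.
  by rewrite -val_y (negbTE (fixed_vertex_not_separates y G_adj cdA Gcd)) in sep.
rewrite invMg; apply: invol_fixed; rewrite ?three_cyclesV //.
by rewrite -invMg -invMg invg_eq1.
Qed.

Lemma rigid_ball2 G : adj_preserving G -> fixes_ball1 G ->
  forall a b, a \in S -> b \in S -> G (vx (a * b)) = vx (a * b).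
Proof.
move=> G_adj G_ball1.
have fix_noninvol c d : c \in S -> d \in S -> c * d * (c * d) != 1 -> G (vx (c * d)) = vx (c * d).
  by move=> cS dS cd2; apply: rigid_product => // cd1; rewrite cd1 eqxx in cd2.
by move=> a b aS bS; apply: rigid_product => // _; apply: fix_noninvol.
Qed.

End Rigidity.

Section Kernel.
Variable n : nat.
Hypothesis n4 : (4 < n)%N.
Local Notation S := (three_cycles n).
Local Notation K := (Kker n).
Implicit Types (g : {perm vert n}) (s : {perm 'I_n}).

Lemma Kker_adj g : g \in K -> adj_preserving g.
Proof. by rewrite !inE => /andP[/andP[/forallP g_adj _] _] x y; apply/eqP/(forallP (g_adj x)). Qed.

Lemma Kker_vid g : g \in K -> g (vid n) = vid n.
Proof. by rewrite !inE => /andP[/andP[_ /eqP]]. Qed.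

Lemma Kker_three_cycle g s : g \in K -> s \in S ->
  val (g (vx s)) = s \/ val (g (vx s)) = s^-1.
Proof.
move=> gK /three_cycles_min[a [b [c [u ab ac def_s]]]].
have sA : s \in Alt 'I_n by rewrite def_s cyc3_Alt.
have stable (i j k : 'I_n) : (i < j < k)%N -> vx s \in Delta i j k -> g (vx s) \in Delta i j k.
  move: gK; rewrite inE => /andP[_ /forallP/(_ i)/forallP/(_ j)/forallP/(_ k)/implyP gD].
  by move=> ijk vD; rewrite -(eqP (gD ijk)); apply: imset_f.
have [ucb ubc] : uniq [:: a; c; b] /\ b != c.
  by case/uniq3P: u => ab' ac' bc'; split=> //; apply/uniq3P; split; rewrite // eq_sym.
case: (ltnP b c) => [lt_bc|le_cb].
  have := stable a b c; rewrite ab lt_bc !inE vxK // !is_cyc3E u ucb def_s eqxx /=.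
  by move=> /(_ isT isT) /orP[] /eqP->; [left | right; rewrite cyc3V].
have lt_cb : (c < b)%N by rewrite ltn_neqAle le_cb andbT -val_eqE eq_sym in ubc *.
have := stable a c b; rewrite ac lt_cb !inE vxK // !is_cyc3E u ucb def_s eqxx orbT /=.
by move=> /(_ isT isT) /orP[] /eqP->; [right; rewrite cyc3V | left].
Qed.

Lemma Kker_fixes_separated g C X : g \in K -> C \in S -> X \in S ->
  separates C^-1 X X^-1 -> (val (g (vx C)) == C) = (val (g (vx X)) == X).
Proof.
rewrite /separates => gK CS XS forced; have SA := subsetP (three_cycles_Alt n).
have := Kker_adj gK (vx C) (vx X); rewrite /adj !vxK ?SA //.
have CXV : (C * X \in S) = (C^-1 * X^-1 \in S).
  by rewrite -three_cyclesV invMg -(three_cyclesJ _ X^-1) /conjg invgK -mulgA mulKVg.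
case: (Kker_three_cycle gK CS) => ->; case: (Kker_three_cycle gK XS) => -> adjE.
- by rewrite !eqxx.
- by rewrite adjE eqxx in forced.
- by rewrite invgK CXV in adjE; rewrite adjE eqxx in forced.
by rewrite !(negbTE (three_cycles_invg_neq _)).
Qed.

Lemma cyc3_separates (a b c d : 'I_n) : uniq [:: a; b; c] -> uniq [:: a; b; d] -> c != d ->
  separates (cyc3 a b c)^-1 (cyc3 a b d) (cyc3 a b d)^-1.
Proof.
rewrite /separates => /uniq3P[ab ac bc] /uniq3P[_ ad bd] cd.
have -> : (cyc3 a b c)^-1 * cyc3 a b d = cyc3 a c d.
  by rewrite /cyc3 invMg !tpermV mulgA -(mulgA (tperm a c)) tperm2 mulg1.
rewrite cyc3_mem; last by apply/uniq3P.
have [[acb_a acb_c _] [_ _ adb_b]] : [/\ cyc3 a c b a = c, cyc3 a c b c = b & cyc3 a c b b = a] /\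
    [/\ cyc3 a d b a = d, cyc3 a d b d = b & cyc3 a d b b = a].
  by split; apply: cyc3_pts; apply/uniq3P; split; rewrite // eq_sym.
have adb_c : cyc3 a d b c = c.
  rewrite cyc3E; last by apply/uniq3P; split; rewrite // eq_sym.
  by rewrite (eq_sym c a) (negbTE ac) (negbTE cd) (eq_sym c b) (negbTE bc).
apply/negP=> zS; have := three_cycles_fix_sq (x := a) zS.
rewrite !permM !cyc3V acb_a adb_c acb_c adb_b => /(_ erefl) /eqP.
by rewrite eq_sym (negbTE ac).
Qed.

Lemma Kker_fixes_const g s s' : g \in K -> s \in S -> s' \in S ->
  (val (g (vx s)) == s) = (val (g (vx s')) == s').
Proof.
move=> gK /three_cyclesP[a [b [c [u ->]]]] /three_cyclesP[p [q [r [u' ->]]]].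
apply: (@triple_const _ (fun a b c => val (g (vx (cyc3 a b c))) == cyc3 a b c)) => //.
- by move=> x y z; apply: (@exists_notin 'I_n); rewrite card_ord /=; lia.
- by move=> x y z uxyz; rewrite (cyc3_rot uxyz).
move=> x y z w u1 u2; have [<-//|zw] := eqVneq z w.
by apply: Kker_fixes_separated; rewrite ?cyc3_mem ?cyc3_separates.
Qed.

Lemma Kker_inj g1 g2 s : g1 \in K -> g2 \in K -> s \in S ->
  (val (g1 (vx s)) == s) = (val (g2 (vx s)) == s) -> g1 = g2.
Proof.
move=> g1K g2K sS same.
have agree t : t \in S -> g1 (vx t) = g2 (vx t).
  move=> tS; apply: val_inj; have tVt := negbTE (three_cycles_invg_neq tS).
  have := Kker_fixes_const g1K sS tS; rewrite same (Kker_fixes_const g2K sS tS).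
  by case: (Kker_three_cycle g1K tS) (Kker_three_cycle g2K tS) => -> [] ->; rewrite ?eqxx ?tVt.
pose F v := g2^-1 (g1 v).
have F_adj : adj_preserving F by move=> x y; rewrite /F -(Kker_adj g2K) !permKV Kker_adj.
have F_ball1 : fixes_ball1 F.
  by split=> [|t tS]; rewrite /F ?agree ?permK // (Kker_vid g1K) -{1}(Kker_vid g2K) permK.
have F_id := rigid_global (@rigid_ball2 n n4) n4 F_adj F_ball1.
by apply/permP=> v; move/(congr1 g2): (F_id v); rewrite /F permKV.
Qed.

End Kernel.

Theorem lemma3p6 (n : nat) : (5 <= n)%N -> (#|Kker n| <= 2)%N.
Proof.
move=> n5; have [lt0 lt1 lt2] : [/\ 0 < n, 1 < n & 2 < n]%N by split; lia.
pose s := cyc3 (Ordinal lt0) (Ordinal lt1) (Ordinal lt2).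
have sS : s \in three_cycles n by apply: cyc3_mem.
have fixes_s_inj : {in Kker n &, injective (fun g : {perm vert n} => val (g (vx s)) == s)}.
  by move=> g1 g2 g1K g2K; apply: Kker_inj.
by rewrite -(card_in_imset fixes_s_inj) (leq_trans (max_card _)) ?card_bool.
Qed.
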